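(* Under the standing assumptions, if $1/4<a<b/27+1/3$ and $\theta\in(\pi/2,\pi)$ satisfies $-1<\cos\theta<-\frac{1}{2\sqrt a}$, then $\zeta(\theta)<0$.
   Context: Standing assumptions: $a,b\in\mathbb{R}$ with $b>0$, $1+a+b>0$, $9-27a+b>0$, $2-8a+8a^2+ab\ne0$, $b+1-a\ne0$. Let $f^*(\zeta,\theta)=(\zeta+2\cos\theta)(2\zeta\cos\theta+1)+b\zeta-a(\zeta+2\cos\theta)^3$. Under these assumptions, for each $\theta\in(\pi/2,\pi)$ the polynomial $f^*(\cdot,\theta)$ has exactly one real zero in $(-1,1)$; denote it $w(\theta)$ and set $\zeta(\theta)=1/w(\theta)$ (taken as $\infty$ when $w(\theta)=0$). *)

From Stdlib Require Export Reals Lra.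
Open Scope R_scope.

Definition fstar (a b zeta theta : R) : R :=
  (zeta + 2 * cos theta) * (2 * zeta * cos theta + 1) + b * zeta
  - a * (zeta + 2 * cos theta) ^ 3.

Definition standing (a b : R) : Prop :=
  0 < b /\ 0 < 1 + a + b /\ 0 < 9 - 27 * a + b /\
  2 - 8 * a + 8 * a ^ 2 + a * b <> 0 /\ b + 1 - a <> 0.

(* For W := - cos theta in (0,1), write f*(z) for f*(z,theta).  On [0,1] the
   cubic splits as
     f*(z) = (1 - z) f*(0) + z ((1 - z) q + z f*(1) + a z (1 - z)),
   with q := fstar_mid_coef a b W.  Here f*(0) = 2 W (4 a W^2 - 1) > 0 exactly
   because cos theta < -1/(2 sqrt a), while q and f*(1) are positive for every W in (0,1) once b > 27 a - 9.
   Hence f* has no zero in [0,1), and the zero w in (-1,1) is negative. *)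
From Stdlib Require Import Reals Lra Psatz.
Open Scope R_scope.

Definition fstar_mid_coef (a b W : R) : R :=
  1 + b + 4 * W ^ 2 - 2 * W + 4 * a * W ^ 2 * (2 * W - 3).

Lemma fstar_decomposition (a b z theta W : R) :
  cos theta = - W ->
  fstar a b z theta =
    (1 - z) * (2 * W * (4 * a * W ^ 2 - 1))
    + z * ((1 - z) * fstar_mid_coef a b W + z * fstar a b 1 theta
           + a * z * (1 - z)).
Proof. intros Hc; unfold fstar_mid_coef, fstar; rewrite Hc; ring. Qed.

Lemma fstar_one (a b theta W : R) :
  cos theta = - W ->
  fstar a b 1 theta = b + (1 - 2 * W) ^ 2 * (1 - a * (1 - 2 * W)).
Proof. intros Hc; unfold fstar; rewrite Hc; ring. Qed.

Section CoefficientsPositive.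

Variables a b W : R.
Hypotheses (Ha : 0 < a) (Hb : 0 < b) (Hab : 27 * a - 9 < b) (HW0 : 0 < W) (HW1 : W < 1).

(* In both cases the bound reduces to
   3 (1 - 2 W + 8/3 W^3) = (2 W - 1)^2 (2 W + 2) + 1 > 0. *)
Lemma fstar_mid_coef_pos : 0 < fstar_mid_coef a b W.
Proof.
  unfold fstar_mid_coef.
  assert (cubic : 0 <= (2 * W - 1) ^ 2 * (2 * W + 2))
    by (apply Rmult_le_pos; [apply pow2_ge_0 | lra]).
  destruct (Rle_lt_dec a (1 / 3)).
  - assert (0 <= (1 / 3 - a) * (W ^ 2 * (3 - 2 * W)))
      by (apply Rmult_le_pos; [lra | nra]).
    lra.
  - assert (0 <= (a - 1 / 3) * (27 + 8 * W ^ 3 - 12 * W ^ 2))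
      by (apply Rmult_le_pos; [lra | nra]).
    lra.
Qed.

Lemma fstar_one_coef_pos : 0 < b + (1 - 2 * W) ^ 2 * (1 - a * (1 - 2 * W)).
Proof.
  destruct (Rle_lt_dec (1 - a * (1 - 2 * W)) 0).
  - assert (1 <= a) by nra.
    assert ((1 - 2 * W) ^ 2 <= 1) by nra.
    nra.
  - assert (0 <= (1 - 2 * W) ^ 2 * (1 - a * (1 - 2 * W)))
      by (apply Rmult_le_pos; [apply pow2_ge_0 | lra]).
    lra.
Qed.

End CoefficientsPositive.

Lemma fstar_pos_on_unit_interval (a b z theta : R) :
  0 < a -> 0 < b -> 27 * a - 9 < b ->
  -1 < cos theta < 0 -> 1 < 4 * a * cos theta ^ 2 ->
  0 <= z < 1 -> 0 < fstar a b z theta.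
Proof.
  intros Ha Hb Hab [Hc1 Hc2] Hk [Hz0 Hz1].
  set (W := - cos theta).
  assert (HW : cos theta = - W) by (unfold W; ring).
  assert (HW0 : 0 < W) by (unfold W; lra).
  assert (HW1 : W < 1) by (unfold W; lra).
  assert (HkW : 1 < 4 * a * W ^ 2) by (unfold W; nra).
  pose proof (fstar_mid_coef_pos a b W Ha Hb Hab HW0 HW1) as mid_pos.
  pose proof (fstar_one_coef_pos a b W Ha Hb Hab HW0 HW1) as one_pos.
  rewrite <- (fstar_one a b theta W HW) in one_pos.
  rewrite (fstar_decomposition a b z theta W HW).
  assert (at_zero : 0 < (1 - z) * (2 * W * (4 * a * W ^ 2 - 1)))
    by (apply Rmult_lt_0_compat; [lra | apply Rmult_lt_0_compat; lra]).
  assert (bracket : 0 <= (1 - z) * fstar_mid_coef a b W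
                         + z * fstar a b 1 theta + a * z * (1 - z)).
  { assert (0 <= (1 - z) * fstar_mid_coef a b W) by (apply Rmult_le_pos; lra).
    assert (0 <= z * fstar a b 1 theta) by (apply Rmult_le_pos; lra).
    assert (0 <= a * z * (1 - z))
      by (apply Rmult_le_pos; [apply Rmult_le_pos |]; lra).
    lra. }
  assert (0 <= z * ((1 - z) * fstar_mid_coef a b W
                    + z * fstar a b 1 theta + a * z * (1 - z)))
    by (apply Rmult_le_pos; lra).
  lra.
Qed.

Lemma sqr_gt_of_lt_neg_inv_2sqrt (a c : R) :
  0 < a -> c < - (1 / (2 * sqrt a)) -> c < 0 /\ 1 < 4 * a * c ^ 2.
Proof.
  intros Ha Hc.
  assert (Hs : 0 < sqrt a) by (apply sqrt_lt_R0; exact Ha).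
  assert (Hsa : sqrt a * sqrt a = a) by (apply sqrt_sqrt; lra).
  assert (Hinv : 1 / (2 * sqrt a) * (2 * sqrt a) = 1) by (field; lra).
  assert (Hlt : 1 < - c * (2 * sqrt a)) by nra.
  split; [nra |].
  replace (4 * a * c ^ 2) with ((- c * (2 * sqrt a)) ^ 2).
  - nra.
  - replace ((- c * (2 * sqrt a)) ^ 2) with (4 * (sqrt a * sqrt a) * c ^ 2)
      by ring.
    rewrite Hsa; reflexivity.
Qed.

Theorem mainTheorem12 (a b theta : R) :
  standing a b ->
  1 / 4 < a -> a < b / 27 + 1 / 3 ->
  PI / 2 < theta < PI ->
  -1 < cos theta < - (1 / (2 * sqrt a)) ->
  forall w : R, -1 < w < 1 -> fstar a b w theta = 0 ->
    w <> 0 /\ / w < 0.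
Proof.
  intros [Hb _] Ha Hab _ [Hc1 Hc2] w [Hw1 Hw2] Hroot.
  destruct (sqr_gt_of_lt_neg_inv_2sqrt a (cos theta)) as [Hneg Hk]; [lra | exact Hc2 |].
  assert (Hw_neg : w < 0).
  { destruct (Rlt_le_dec w 0) as [Hw | Hw]; [exact Hw | exfalso].
    assert (0 < fstar a b w theta)
      by (apply fstar_pos_on_unit_interval; lra).
    lra. }
  split; [lra | exact (Rinv_lt_0_compat w Hw_neg)].
Qed.
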